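(* For every rectangle $R \subset \mathbb{R}^2$, $$\textup{Var}\Big( \mathbb{P}\big( H_R \,|\, \eta \big) \Big) \, \leqslant \, \sum_{m=1}^n \mathbb{E}\big[ \textup{Inf}_m( f_R^\eta )^2 \big].$$
   Context: Let $R$ be a rectangle with sides parallel to the axes, let $\eta = \{\eta_1,\ldots,\eta_n\}$ be $n$ points chosen independently and uniformly at random in $R$, and let $\omega \colon \eta \to \{-1,1\}$ be a uniformly random colouring. The Voronoi cell of $u \in \eta$ is $C(u) = \{ x \in R : \|u - x\|_2 \leqslant \|v - x\|_2 \ \forall v \in \eta\}$; it is red if $\omega(u)=1$ and blue if $\omega(u)=-1$. $H_R$ is the event that there is a path in $R$ from its left-hand side to its right-hand side intersecting only red cells, and $f_R^\eta \colon \{-1,1\}^\eta \to \{0,1\}$ is the indicator function of $H_R$ for the tiling given by $\eta$. The influence is $\textup{Inf}_m(f_R^\eta) = \mathbb{P}( f_R^\eta(\omega) \neq f_R^\eta(\omega') \,|\, \eta )$, where $\omega'$ equals $\omega$ except that the colour of $\eta_m$ is flipped. *)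

From HB Require Import structures.
From mathcomp Require Import all_boot all_order all_algebra.
From mathcomp Require Import all_classical all_reals all_analysis.
Set Implicit Arguments. Unset Strict Implicit. Unset Printing Implicit Defensive.
Import Order.TTheory GRing.Theory Num.Theory.
Import numFieldNormedType.Exports.
Local Open Scope classical_set_scope.
Local Open Scope ring_scope.

Section Voronoi.
Variable R : realType.

Definition rect (a b c d : R) : set (R * R) :=
  [set x | a <= x.1 <= b /\ c <= x.2 <= d].

Definition dist2 (u x : R * R) : R :=
  Num.sqrt ((u.1 - x.1) ^+ 2 + (u.2 - x.2) ^+ 2).

(* eta is the configuration of points eta_0, ..., eta_(n-1), given as a
   sequence (only used with size eta = n). *)
Definition pt (eta : seq (R * R)) (i : nat) : R * R := nth (0, 0) eta i.

Definition cell (a b c d : R) (n : nat) (eta : seq (R * R)) (m : 'I_n)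
  : set (R * R) :=
  [set x | rect a b c d x /\
           forall v : 'I_n, dist2 (pt eta m) x <= dist2 (pt eta v) x].

(* Colourings: true = red (omega = 1), false = blue (omega = -1). *)
Definition colouring (n : nat) := {ffun 'I_n -> bool}.

Definition crossing (a b c d : R) (n : nat) (eta : seq (R * R))
  (omega : colouring n) : Prop :=
  exists gamma : R -> R * R,
    {within `[0, 1], continuous gamma} /\
    (forall t, t \in `[0, 1] -> rect a b c d (gamma t)) /\
    (gamma 0).1 = a /\ (gamma 1).1 = b /\
    forall t, t \in `[0, 1] -> forall m : 'I_n,
      cell a b c d eta m (gamma t) -> omega m = true.

Definition fR (a b c d : R) (n : nat) (eta : seq (R * R))
  (omega : colouring n) : bool := `[< crossing a b c d eta omega >].

Definition flip (n : nat) (m : 'I_n) (omega : colouring n) : colouring n :=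
  [ffun i => if i == m then ~~ omega i else omega i].

Definition probH (a b c d : R) (n : nat) (eta : seq (R * R)) : R :=
  (#|[set omega : colouring n | fR a b c d eta omega]|)%:R / (2 ^ n)%:R.

Definition Inf (a b c d : R) (n : nat) (eta : seq (R * R)) (m : 'I_n) : R :=
  (#|[set omega : colouring n |
        fR a b c d eta omega != fR a b c d eta (flip m omega)]|)%:R
  / (2 ^ n)%:R.

Definition E_pt (a b c d : R) (F : R * R -> R) : R :=
  ((b - a) * (d - c))^-1 *
  Rintegral lebesgue_measure `[a, b]
    (fun x => Rintegral lebesgue_measure `[c, d] (fun y => F (x, y))).

(* Expectation of G(eta) for eta = (eta_1, ..., eta_k) i.i.d. uniform in
   the rectangle (iterated integral over the k points). *)
Fixpoint E_eta (a b c d : R) (k : nat) (G : seq (R * R) -> R) : R :=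
  match k with
  | 0 => G [::]
  | k'.+1 => E_pt a b c d (fun p => E_eta a b c d k' (fun s => G (p :: s)))
  end.

Definition Var_eta (a b c d : R) (k : nat) (G : seq (R * R) -> R) : R :=
  E_eta a b c d k (fun eta => (G eta - E_eta a b c d k G) ^+ 2).

End Voronoi.

(* Resampling the points one at a time gives the Efron-Stein
   inequality [Var g <= sum_m E[D_m^2]] for any family [D_m] such that
   [|g(eta) - g(eta')| <= (D_m(eta) + D_m(eta'))/2] whenever [eta'] differs
   from [eta] only in its [m]-th point.  For [g = P(H_R | eta)] the
   influences [D_m = Inf_m] qualify: pairing each colouring with its flip at
   [eta_m], moving a blue [eta_m] cannot destroy a red crossing once [eta_m]
   is turned red, so the four crossing indicators involved change by at most
   the number of pivotal pairs.
   All expectations are iterated Lebesgue integrals, so the argument needs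
   measurability throughout.  It comes from lower semicontinuity: a crossing
   survives small moves of the points (Voronoi cells move continuously and
   the crossing path is compact), and by Fatou's lemma integrals of bounded
   nonnegative lower semicontinuous functions are again lower semicontinuous.
   Differences of such functions form an algebra on which the iterated
   integrals are linear and monotone. *)

From mathcomp Require Import all_boot all_order all_algebra.
From mathcomp Require Import all_classical all_reals all_analysis.
From mathcomp Require Import measurable_realfun.
From mathcomp.algebra_tactics Require Import ring lra.
Import Order.TTheory GRing.Theory Num.Theory.
Import numFieldNormedType.Exports.
Local Open Scope classical_set_scope.
Local Open Scope ring_scope.
Set Implicit Arguments. Unset Strict Implicit. Unset Printing Implicit Defensive.

Section NonnegBoundedLsc.
Variable R : realType.
Notation mu := (@lebesgue_measure R).

(* Lower semicontinuity on the part [dom] of a parameter space [P] whose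
   topology is given by the closeness relations [near del], [del > 0]. *)
Definition nonneg_bounded_lsc (P : Type) (dom : P -> Prop)
    (near : R -> P -> P -> Prop) (F : P -> R) :=
  [/\ forall p, dom p -> 0 <= F p,
      exists M, forall p, dom p -> F p <= M &
      forall p, dom p -> forall e, 0 < e -> exists2 del, 0 < del &
        forall p', dom p' -> near del p p' -> F p - e < F p'].

Definition near_real (del x y : R) := `|x - y| < del.

Definition near_prod (P : Type) (near : R -> P -> P -> Prop) del
    (py py' : P * R) :=
  near del py.1 py'.1 /\ near_real del py.2 py'.2.

Lemma near_real_refl del x : 0 < del -> near_real del x x.
Proof. by rewrite /near_real subrr normr0. Qed.

Lemma near_real_mono del del' x y :
  del <= del' -> near_real del x y -> near_real del' x y.
Proof. by rewrite /near_real => dd xy; exact: lt_le_trans xy dd. Qed.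

Lemma near_prod_refl (P : Type) (near : R -> P -> P -> Prop) :
  (forall del p, 0 < del -> near del p p) ->
  forall del py, 0 < del -> near_prod near del py py.
Proof. by move=> nr del py d0; split; [exact: nr | exact: near_real_refl]. Qed.

Lemma near_prod_mono (P : Type) (near : R -> P -> P -> Prop) :
  (forall del del' p p', del <= del' -> near del p p' -> near del' p p') ->
  forall del del' py py', del <= del' ->
    near_prod near del py py' -> near_prod near del' py py'.
Proof.
move=> nm del del' py py' dd [h1 h2].
by split; [exact: nm h1 | exact: near_real_mono h2].
Qed.

Lemma nonneg_bounded_lsc_measurable (f : R -> R) :
  nonneg_bounded_lsc (fun _ => True) near_real f -> measurable_fun setT f.
Proof.
case=> _ _ lf; apply/measurable_EFinP; apply: lower_semicontinuous_measurable.
move=> x a /=; rewrite lte_fin => afx.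
have /(lf x I) [del del0 H] : 0 < f x - a by rewrite subr_gt0.
exists (ball x del); first exact: nbhsx_ballx.
move=> y; rewrite -ball_normE /= => xy.
by rewrite lte_fin; have := H y I xy; rewrite opprB addrCA subrr addr0.
Qed.

Lemma lebesgue_measure_itv_lty (c d : R) : (mu `[c, d] < +oo)%E.
Proof.
by rewrite lebesgue_measure_itv; case: ifP => _ //; rewrite -EFinB ltry.
Qed.

Lemma nonneg_bounded_lsc_integrable (c d : R) (f : R -> R) :
  nonneg_bounded_lsc (fun _ => True) near_real f ->
  mu.-integrable `[c, d] (EFin \o f).
Proof.
move=> lf; have [f0 [M fM] _] := lf.
apply: measurable_bounded_integrable => //.
- exact: lebesgue_measure_itv_lty.
- exact: measurable_funS (nonneg_bounded_lsc_measurable lf).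
- exists M; split; first by rewrite num_real.
  move=> r Mr x _ /=; rewrite ger0_norm ?f0 //.
  exact: le_trans (fM x I) (ltW Mr).
Qed.

Section Closure.
Variables (P : Type) (dom : P -> Prop) (near : R -> P -> P -> Prop).
Hypothesis near_mono :
  forall del del' p p', del <= del' -> near del p p' -> near del' p p'.
Notation nblsc := (nonneg_bounded_lsc dom near).

Lemma nonneg_bounded_lsc_ext (F G : P -> R) :
  (forall p, dom p -> F p = G p) -> nblsc F -> nblsc G.
Proof.
move=> FG [F0 [M FM] Fl]; split.
- by move=> p dp; rewrite -FG // F0.
- by exists M => p dp; rewrite -FG // FM.
- move=> p dp e e0; have [del d0 H] := Fl p dp e e0.
  by exists del => // p' dp' pp'; rewrite -!FG //; apply: H.
Qed.

Lemma nonneg_bounded_lsc_cst k : 0 <= k -> nblsc (fun _ => k).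
Proof.
move=> k0; split => //; first by exists k.
by move=> p _ e e0; exists 1 => // p' _ _; rewrite ltrBlDr ltrDl.
Qed.

Lemma nonneg_bounded_lsc_common_radius (F G : P -> R) p e :
  nblsc F -> nblsc G -> dom p -> 0 < e ->
  exists2 del, 0 < del &
    forall p', dom p' -> near del p p' -> F p - e < F p' /\ G p - e < G p'.
Proof.
move=> [_ _ Fl] [_ _ Gl] dp e0.
have [d1 d10 H1] := Fl p dp e e0; have [d2 d20 H2] := Gl p dp e e0.
exists (Num.min d1 d2); first by rewrite lt_min d10 d20.
move=> p' dp' pp'; split.
- by apply: H1 => //; apply: near_mono pp'; rewrite ge_min lexx.
- by apply: H2 => //; apply: near_mono pp'; rewrite ge_min lexx orbT.
Qed.

Lemma nonneg_bounded_lscD (F G : P -> R) :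
  nblsc F -> nblsc G -> nblsc (fun p => F p + G p).
Proof.
move=> lF lG; have [F0 [M FM] _] := lF; have [G0 [N GN] _] := lG; split.
- by move=> p dp; rewrite addr_ge0 ?F0 ?G0.
- by exists (M + N) => p dp; rewrite lerD ?FM ?GN.
- move=> p dp e e0; have e20 : 0 < e / 2 by rewrite divr_gt0.
  have [del d0 H] := nonneg_bounded_lsc_common_radius lF lG dp e20.
  exists del => // p' dp' /(H _ dp') [h1 h2].
  by rewrite [e](splitr e); lra.
Qed.

Lemma nonneg_bounded_lscM (F G : P -> R) :
  nblsc F -> nblsc G -> nblsc (fun p => F p * G p).
Proof.
move=> lF lG; have [F0 [M FM] _] := lF; have [G0 [N GN] _] := lG; split.
- by move=> p dp; rewrite mulr_ge0 ?F0 ?G0.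
- by exists (M * N) => p dp; apply: ler_pM; rewrite ?F0 ?G0 ?FM ?GN.
- move=> p dp e e0.
  have M0 : 0 <= M by apply: le_trans (F0 _ dp) (FM _ dp).
  have N0 : 0 <= N by apply: le_trans (G0 _ dp) (GN _ dp).
  have MN0 : 0 < M + N + 1 by rewrite ltr_wpDl // addr_ge0.
  pose e' := e / (M + N + 1).
  have e'0 : 0 < e' by rewrite divr_gt0.
  have e'E : e' * (M + N + 1) = e by rewrite /e' divfK // gt_eqF.
  have [del d0 H] := nonneg_bounded_lsc_common_radius lF lG dp e'0.
  exists del => // p' dp' /(H _ dp') [h1 h2].
  have Fp0 := F0 _ dp; have Gp0 := G0 _ dp; have FpM := FM _ dp.
  have GpN := GN _ dp; have Fp'0 := F0 _ dp'; have Gp'0 := G0 _ dp'.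
  (* Compare with the product of the truncations [max (F p - e') 0] and
     [max (G p - e') 0], which lie below [F] and [G] both at [p] and at [p']. *)
  pose f := Num.max (F p - e') 0; pose g := Num.max (G p - e') 0.
  have f0 : 0 <= f by rewrite le_max lexx orbT.
  have g0 : 0 <= g by rewrite le_max lexx orbT.
  have fF : F p - e' <= f by rewrite le_max lexx.
  have gG : G p - e' <= g by rewrite le_max lexx.
  have fFp' : f <= F p' by rewrite ge_max (ltW h1) Fp'0.
  have gGp' : g <= G p' by rewrite ge_max (ltW h2) Gp'0.
  have fFp : f <= F p by rewrite ge_max Fp0 andbT lerBlDr lerDl ltW.
  have gGp : g <= G p by rewrite ge_max Gp0 andbT lerBlDr lerDl ltW.
  have fg : f * g <= F p' * G p' by apply: ler_pM.
  have : F p * G p - f * g <= M * e' + N * e'.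
    have -> : F p * G p - f * g = F p * (G p - g) + g * (F p - f) by ring.
    by apply: lerD; apply: ler_pM => //; lra.
  nra.
Qed.

Lemma nonneg_bounded_lscZ k (F : P -> R) :
  0 <= k -> nblsc F -> nblsc (fun p => k * F p).
Proof. by move=> k0; apply: nonneg_bounded_lscM; exact: nonneg_bounded_lsc_cst. Qed.

Definition lsc_diff (G : P -> R) :=
  exists F F', [/\ nblsc F, nblsc F' & forall p, dom p -> G p = F p - F' p].

Lemma lsc_diff_ext (G G' : P -> R) :
  (forall p, dom p -> G p = G' p) -> lsc_diff G -> lsc_diff G'.
Proof.
by move=> e [F [F' [lF lF' GE]]]; exists F, F'; split => // p dp; rewrite -e ?GE.
Qed.

Lemma lsc_diff_of_lsc (F : P -> R) : nblsc F -> lsc_diff F.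
Proof.
move=> lF; exists F, (fun _ => 0); split => //; last by move=> p _; rewrite subr0.
exact: nonneg_bounded_lsc_cst.
Qed.

Let pos_part (x : R) := Num.max x 0.
Let neg_part (x : R) := Num.max (- x) 0.

Let pos_part_ge0 x : 0 <= pos_part x.
Proof. by rewrite le_max lexx orbT. Qed.

Let neg_part_ge0 x : 0 <= neg_part x.
Proof. by rewrite le_max lexx orbT. Qed.

Let pos_partB_neg_part x : pos_part x - neg_part x = x.
Proof. by rewrite /pos_part /neg_part !maxEle; case: ifP; case: ifP; lra. Qed.

Lemma lsc_diff_cst k : lsc_diff (fun _ => k).
Proof.
exists (fun _ => pos_part k), (fun _ => neg_part k).
split; try exact: nonneg_bounded_lsc_cst.
by move=> p _; rewrite pos_partB_neg_part.
Qed.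

Lemma lsc_diff_lin al be (G H : P -> R) :
  lsc_diff G -> lsc_diff H -> lsc_diff (fun p => al * G p + be * H p).
Proof.
move=> [F [F' [lF lF' GE]]] [K [K' [lK lK' HE]]].
exists (fun p => pos_part al * F p + neg_part al * F' p +
                 (pos_part be * K p + neg_part be * K' p)).
exists (fun p => neg_part al * F p + pos_part al * F' p +
                 (neg_part be * K p + pos_part be * K' p)).
split; try by repeat apply: nonneg_bounded_lscD; apply: nonneg_bounded_lscZ.
move=> p dp; rewrite GE ?HE // -{1}(pos_partB_neg_part al).
by rewrite -{1}(pos_partB_neg_part be); ring.
Qed.

Lemma lsc_diffD (G H : P -> R) :
  lsc_diff G -> lsc_diff H -> lsc_diff (fun p => G p + H p).
Proof.
move=> lG lH; apply: lsc_diff_ext (lsc_diff_lin 1 1 lG lH) => p _.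
by rewrite !mul1r.
Qed.

Lemma lsc_diffB (G H : P -> R) :
  lsc_diff G -> lsc_diff H -> lsc_diff (fun p => G p - H p).
Proof.
move=> lG lH; apply: lsc_diff_ext (lsc_diff_lin 1 (-1) lG lH) => p _.
by rewrite mul1r mulN1r.
Qed.

Lemma lsc_diffM (G H : P -> R) :
  lsc_diff G -> lsc_diff H -> lsc_diff (fun p => G p * H p).
Proof.
move=> [F [F' [lF lF' GE]]] [K [K' [lK lK' HE]]].
exists (fun p => F p * K p + F' p * K' p), (fun p => F p * K' p + F' p * K p).
split; try by apply: nonneg_bounded_lscD; apply: nonneg_bounded_lscM.
by move=> p dp; rewrite GE ?HE //; ring.
Qed.

Lemma lsc_diffX2 (G : P -> R) : lsc_diff G -> lsc_diff (fun p => G p ^+ 2).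
Proof.
by move=> lG; apply: lsc_diff_ext (lsc_diffM lG lG) => p _; rewrite expr2.
Qed.

Lemma lsc_diff_sum (I : Type) (r : seq I) (F : I -> P -> R) :
  (forall i, lsc_diff (F i)) -> lsc_diff (fun p => \sum_(i <- r) F i p).
Proof.
move=> lF; elim: r => [|i r IH].
  by apply: lsc_diff_ext (lsc_diff_cst 0) => p _; rewrite big_nil.
by apply: lsc_diff_ext (lsc_diffD (lF i) IH) => p _; rewrite big_cons.
Qed.

End Closure.

Section ParametricIntegral.
Variables (P : Type) (dom : P -> Prop) (near : R -> P -> P -> Prop).
Hypothesis near_refl : forall del p, 0 < del -> near del p p.
Hypothesis near_mono :
  forall del del' p p', del <= del' -> near del p p' -> near del' p p'.
Variables (c d : R) (K : P * R -> R).
Hypothesis lK : nonneg_bounded_lsc (fun py => dom py.1) (near_prod near) K.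

Let I p := Rintegral mu `[c, d] (fun y => K (p, y)).

Lemma nonneg_bounded_lsc_section p :
  dom p -> nonneg_bounded_lsc (fun _ => True) near_real (fun y => K (p, y)).
Proof.
case: lK => K0 [M KM] Kl dp; split.
- by move=> y _; exact: (K0 (p, y)).
- by exists M => y _; exact: (KM (p, y)).
- move=> y _ e e0; have [del del0 H] := Kl (p, y) dp e e0.
  exists del => // y' _ yy'; apply: (H (p, y')) => //.
  by split => //; exact: near_refl.
Qed.

Lemma section_integrable p :
  dom p -> mu.-integrable `[c, d] (EFin \o fun y => K (p, y)).
Proof.
by move/nonneg_bounded_lsc_section; exact: nonneg_bounded_lsc_integrable.
Qed.

Let section_measurable p : dom p -> measurable_fun `[c, d] (fun y => K (p, y)).
Proof.
move/nonneg_bounded_lsc_section/nonneg_bounded_lsc_measurable.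
exact: measurable_funS.
Qed.

Let integral_section p :
  dom p -> (\int[mu]_(y in `[c, d]) (K (p, y))%:E = (I p)%:E)%E.
Proof.
move=> dp; rewrite /I /Rintegral fineK //.
exact: integrable_fin_num (section_integrable dp).
Qed.

(* Fatou's lemma, combined with the pointwise lower semicontinuity of [K]. *)
Lemma Rintegral_le_liminf (ps : nat -> P) p : dom p ->
  (forall j, dom (ps j) /\ near j.+1%:R^-1 p (ps j)) ->
  ((I p)%:E <= limn_einf (fun j => (I (ps j))%:E))%E.
Proof.
move=> dp Hps; have [K0 _ Kl] := lK.
pose f j y := (K (ps j, y))%:E.
have mf j : measurable_fun `[c, d] (f j).
  by apply/measurable_EFinP; apply: section_measurable; case: (Hps j).
have f0 j y : `[c, d]%classic y -> (0 <= f j y)%E.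
  by move=> _; rewrite lee_fin; apply: (K0 (ps j, y)); case: (Hps j).
have -> : (fun j => (I (ps j))%:E) = (fun j => \int[mu]_(y in `[c, d]) f j y)%E.
  by apply: funext => j; rewrite integral_section //; case: (Hps j).
apply: (le_trans _ (fatou mu (measurable_itv `[c, d]) mf f0)).
rewrite -integral_section //; apply: ge0_le_integral => //.
- by move=> y _; rewrite lee_fin (K0 (p, y)).
- by apply/measurable_EFinP; exact: section_measurable.
- rewrite /limn_einf; apply: measurableT_comp; first exact: oppe_measurable.
  apply: measurable_fun_limn_esup => j.
  by apply: measurableT_comp; [exact: oppe_measurable | exact: mf].
move=> y _; apply/lee_subgt0Pr => e e0.
rewrite limn_einf_lim; apply: lime_ge; first exact: is_cvg_einfs.
have [del del0 Hd] := Kl (p, y) dp e e0.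
have [N _ /(_ N)/(_ (leqnn _)) Ndel] := near_infty_natSinv_lt (PosNum del0).
exists N => // j Nj; apply: le_ereal_inf_tmp => _ [k /= jk <-].
rewrite /f -EFinB lee_fin; apply: ltW; apply: (Hd (ps k, y)).
  by case: (Hps k).
split; last exact: near_real_refl.
case: (Hps k) => _; apply: near_mono; apply: le_trans (ltW Ndel).
by rewrite lef_pV2 ?posrE ?ltr0n // ler_nat ltnS; exact: leq_trans Nj jk.
Qed.

Lemma nonneg_bounded_lsc_Rintegral : nonneg_bounded_lsc dom near I.
Proof.
have [K0 [M KM] _] := lK; split.
- by move=> p dp; apply: Rintegral_ge0 => y _; exact: (K0 (p, y)).
- exists (M * fine (mu `[c, d])) => p dp; rewrite -Rintegral_cst //.
  apply: le_Rintegral => //; first exact: section_integrable.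
    apply: measurable_bounded_integrable => //.
      exact: lebesgue_measure_itv_lty.
    exists `|M|; split; first by rewrite num_real.
    by move=> r Mr x _ /=; apply: le_trans (ltW Mr).
  by move=> y _; exact: (KM (p, y)).
- move=> p dp e e0; apply: contrapT => /forall2NP noRadius.
  have far j : exists p',
      (dom p' /\ near j.+1%:R^-1 p p') /\ I p' <= I p - e.
    have [|] := noRadius j.+1%:R^-1; first by move/negP; rewrite invr_gt0 ltr0n.
    move=> /existsNP [p' /not_implyP [dp' /not_implyP [pp' /negP]]].
    by rewrite -leNgt => ?; exists p'.
  have [ps Hps] := choice far.
  have := Rintegral_le_liminf dp (fun j => (Hps j).1).
  have : (limn_einf (fun j => (I (ps j))%:E) <= (I p - e)%:E)%E.
    rewrite limn_einf_lim; apply: lime_le; first exact: is_cvg_einfs.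
    apply: nearW => j; apply: (@le_trans _ _ (I (ps j))%:E).
      by rewrite /einfs /=; apply: ereal_inf_lbound; exists j => /=.
    by rewrite lee_fin; exact: (Hps j).2.
  move=> /[swap] /le_trans /[apply]; rewrite lee_fin; lra.
Qed.

End ParametricIntegral.
End NonnegBoundedLsc.

Lemma sqr_le_mean_sqr (R : realFieldType) (D x y : R) :
  `|D| <= (x + y) / 2 -> D ^+ 2 <= (x ^+ 2 + y ^+ 2) / 2.
Proof.
move=> /ler_normlP [lo hi].
have : 0 <= ((x + y) / 2 - D) * ((x + y) / 2 + D) by apply: mulr_ge0; lra.
have : 0 <= (x - y) ^+ 2 by exact: sqr_ge0.
nra.
Qed.

Section Configurations.
Variable R : realType.
Notation mu := (@lebesgue_measure R).
Implicit Types (s t : seq (R * R)).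

Definition near_config n del s t :=
  forall i, (i < n)%N -> near_prod (@near_real R) del (pt s i) (pt t i).

Definition lsc_config n : (seq (R * R) -> R) -> Prop :=
  nonneg_bounded_lsc (fun s => size s = n) (near_config n).

Definition lsc_diff_config n : (seq (R * R) -> R) -> Prop :=
  lsc_diff (fun s => size s = n) (near_config n).

Lemma near_config_refl n del s : 0 < del -> near_config n del s s.
Proof. by move=> d0 i _; apply: near_prod_refl => //; exact: near_real_refl. Qed.

Lemma near_config_mono n del del' s t :
  del <= del' -> near_config n del s t -> near_config n del' s t.
Proof.
by move=> dd cst i /cst; apply: near_prod_mono dd => //; exact: near_real_mono.
Qed.

Lemma near_config_rcons n del s t q q' : size s = n -> size t = n ->
  near_config n del s t -> near_prod (@near_real R) del q q' ->
  near_config n.+1 del (rcons s q) (rcons t q').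
Proof.
move=> sn tn cst qq' i; rewrite ltnS leq_eqVlt => /orP[/eqP ->|i_lt].
  by rewrite /pt !nth_rcons sn tn ltnn eqxx.
by rewrite /pt !nth_rcons sn tn i_lt; exact: cst.
Qed.

Lemma lsc_config_cons n u p :
  lsc_config n.+1 u -> lsc_config n (fun s => u (p :: s)).
Proof.
move=> [u0 [M uM] ul]; split.
- by move=> s sn; apply: u0; rewrite /= sn.
- by exists M => s sn; apply: uM; rewrite /= sn.
- move=> s sn e e0; have [del d0 H] := ul (p :: s) (congr1 S sn) e e0.
  exists del => // t tn ct; apply: H; first by rewrite /= tn.
  case=> [_|i]; last by rewrite ltnS => /ct.
  by rewrite /pt /=; apply: near_prod_refl => //; exact: near_real_refl.
Qed.

Lemma lsc_diff_config_cons n G p :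
  lsc_diff_config n.+1 G -> lsc_diff_config n (fun s => G (p :: s)).
Proof.
move=> [u [v [lu lv Ge]]]; exists (fun s => u (p :: s)), (fun s => v (p :: s)).
by split; try exact: lsc_config_cons; move=> s sn; rewrite Ge //= sn.
Qed.

Lemma lsc_config1_point F : lsc_config 1 F ->
  nonneg_bounded_lsc (fun _ => True) (near_prod (@near_real R)) (fun q => F [:: q]).
Proof.
move=> [F0 [M FM] Fl]; split.
- by move=> q _; exact: F0.
- by exists M => q _; exact: FM.
- move=> q _ e e0; have [del d0 H] := Fl [:: q] erefl e e0.
  by exists del => // q' _ qq'; apply: H => // -[_|//]; exact: qq'.
Qed.

Lemma lsc_diff_config1_integrable (a b c d : R) W :
  lsc_diff_config 1 (fun s => W (pt s 0)) ->
  (forall x, mu.-integrable `[c, d] (EFin \o fun y => W (x, y))) /\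
  mu.-integrable `[a, b]
    (EFin \o fun x => Rintegral mu `[c, d] (fun y => W (x, y))).
Proof.
move=> [u [v [/lsc_config1_point lu /lsc_config1_point lv We]]].
have inner F x :
    nonneg_bounded_lsc (fun _ => True) (near_prod (@near_real R)) F ->
    mu.-integrable `[c, d] (EFin \o fun y => F (x, y)).
  move=> lF; exact: (@section_integrable _ _ (fun _ => True) _
    (@near_real_refl R) c d F lF x I).
have outer F : nonneg_bounded_lsc (fun _ => True) (near_prod (@near_real R)) F ->
    mu.-integrable `[a, b]
      (EFin \o fun x => Rintegral mu `[c, d] (fun y => F (x, y))).
  move=> lF; apply: nonneg_bounded_lsc_integrable.
  exact: (@nonneg_bounded_lsc_Rintegral _ _ (fun _ => True) _
    (@near_real_refl R) (@near_real_mono R) c d F lF).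
have WE q : W q = u [:: q] - v [:: q] by exact: (We [:: q]).
split.
- move=> x.
  apply: eq_integrable (integrableB _ (inner _ x lu) (inner _ x lv)) => //.
  by move=> y _; rewrite /= WE EFinB.
- apply: eq_integrable (integrableB _ (outer _ lu) (outer _ lv)) => // x _ /=.
  rewrite -EFinB -(RintegralB _ (inner _ x lu) (inner _ x lv)) //.
  by congr EFin; apply: eq_Rintegral => y _; rewrite WE.
Qed.

Lemma Rintegral_lin (x y : R) (f g : R -> R) al be :
  mu.-integrable `[x, y] (EFin \o f) -> mu.-integrable `[x, y] (EFin \o g) ->
  Rintegral mu `[x, y] (fun z => al * f z + be * g z) =
  al * Rintegral mu `[x, y] f + be * Rintegral mu `[x, y] g.
Proof.
move=> fi gi; rewrite RintegralD ?RintegralZl //.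
- by apply: eq_integrable (integrableZl _ _ fi) => // z _; rewrite /= EFinM.
- by apply: eq_integrable (integrableZl _ _ gi) => // z _; rewrite /= EFinM.
Qed.

Section Expectation.
Variables a b c d : R.
Hypotheses (ab : a < b) (cd : c < d).
Notation E := (E_eta a b c d).

Let normalizer_ge0 : 0 <= ((b - a) * (d - c))^-1.
Proof. by rewrite invr_ge0 mulr_ge0 // subr_ge0 ltW. Qed.

Lemma lsc_config_E_pt m K : lsc_config m.+1 K ->
  lsc_config m (fun s => E_pt a b c d (fun q => K (rcons s q))).
Proof.
move=> [K0 [M KM] Kl].
have lK : nonneg_bounded_lsc (fun sxy : seq (R * R) * R * R => size sxy.1.1 = m)
    (near_prod (near_prod (near_config m)))
    (fun sxy => K (rcons sxy.1.1 (sxy.1.2, sxy.2))).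
  split.
  - by move=> [[s x] y] /= sm; apply: K0; rewrite size_rcons sm.
  - by exists M => -[[s x] y] /= sm; apply: KM; rewrite size_rcons sm.
  - move=> [[s x] y] /= sm e e0.
    have sz : size (rcons s (x, y)) = m.+1 by rewrite size_rcons sm.
    have [del d0 H] := Kl _ sz e e0.
    exists del => // -[[t x'] y'] /= tm [[st xx'] yy']; apply: H.
      by rewrite size_rcons tm.
    exact: near_config_rcons.
have lKy := nonneg_bounded_lsc_Rintegral
  (dom := fun sx : seq (R * R) * R => size sx.1 = m)
  (near_prod_refl (@near_config_refl m)) (near_prod_mono (@near_config_mono m))
  c d lK.
have lKxy := nonneg_bounded_lsc_Rintegral (dom := fun s => size s = m)
  (@near_config_refl m) (@near_config_mono m) a b lKy.
by apply: nonneg_bounded_lsc_ext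
  (nonneg_bounded_lscZ (@near_config_mono m) normalizer_ge0 lKxy).
Qed.

Lemma lsc_config_E n : forall m G, lsc_config (m + n) G ->
  lsc_config m (fun s => E n (fun t => G (s ++ t))).
Proof.
elim: n => [|n IH] m G.
  by rewrite addn0; apply: nonneg_bounded_lsc_ext => s _; rewrite /= cats0.
move=> lG; have := IH m.+1 G; rewrite addSnnS => /(_ lG) /lsc_config_E_pt.
apply: nonneg_bounded_lsc_ext => s _ /=; congr E_pt; apply: funext => q.
by congr E_eta; apply: funext => t; rewrite cat_rcons.
Qed.

Lemma lsc_config_section n u : lsc_config n.+1 u ->
  lsc_config 1 (fun s => E n (fun t => u (pt s 0 :: t))).
Proof.
move=> /(lsc_config_E (m := 1)); apply: nonneg_bounded_lsc_ext => s.
by case: s => [|p [|]].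
Qed.

Lemma E_ext n G G' : (forall s, size s = n -> G s = G' s) -> E n G = E n G'.
Proof.
elim: n G G' => [|n IH] G G' GG' /=; first exact: GG'.
by congr E_pt; apply: funext => p; apply: IH => s sn; apply: GG'; rewrite /= sn.
Qed.

Lemma E_ge0 n G : (forall s, size s = n -> 0 <= G s) -> 0 <= E n G.
Proof.
elim: n G => [|n IH] G G0 /=; first exact: G0.
rewrite /E_pt mulr_ge0 //; apply: Rintegral_ge0 => x _.
apply: Rintegral_ge0 => y _; apply: IH => s sn; apply: G0.
by rewrite /= sn.
Qed.

Lemma E_cst n k : E n (fun _ => k) = k.
Proof.
have len x y : x < y -> fine (mu `[x, y]) = y - x.
  by move=> xy; rewrite lebesgue_measure_itv /= lte_fin xy.
elim: n k => [//|n IH] k /=.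
rewrite (_ : (fun p => _) = fun _ => k); last by apply: funext => p; rewrite IH.
rewrite /E_pt Rintegral_cst // len // Rintegral_cst // len //.
have ba : b - a != 0 by rewrite subr_eq0 gt_eqF.
have dc : d - c != 0 by rewrite subr_eq0 gt_eqF.
by rewrite -mulrA (mulrC (d - c)) mulrCA mulVf ?mulr1 // mulf_neq0.
Qed.

Lemma E_pt_lin U V al be :
  lsc_diff_config 1 (fun s => U (pt s 0)) ->
  lsc_diff_config 1 (fun s => V (pt s 0)) ->
  E_pt a b c d (fun q => al * U q + be * V q) =
  al * E_pt a b c d U + be * E_pt a b c d V.
Proof.
move=> /(lsc_diff_config1_integrable a b c d) [Ui Uo].
move=> /(lsc_diff_config1_integrable a b c d) [Vi Vo].
rewrite /E_pt (_ : (fun x => _) = fun x =>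
    al * Rintegral mu `[c, d] (fun y => U (x, y)) +
    be * Rintegral mu `[c, d] (fun y => V (x, y))); last first.
  by apply: funext => x; rewrite Rintegral_lin.
by rewrite Rintegral_lin //; ring.
Qed.

(* Assumes the additivity of [E n], so that it can serve inside the
   induction proving [E_lin]. *)
Let lsc_diff_section_of_sub n G :
  (forall u v, lsc_config n u -> lsc_config n v ->
     E n (fun s => u s - v s) = E n u - E n v) ->
  lsc_diff_config n.+1 G ->
  lsc_diff_config 1 (fun s => E n (fun t => G (pt s 0 :: t))).
Proof.
move=> E_subn [u [v [lu lv Ge]]].
exists (fun s => E n (fun t => u (pt s 0 :: t))).
exists (fun s => E n (fun t => v (pt s 0 :: t))).
split; try exact: lsc_config_section.
move=> s _; rewrite -E_subn; try exact: lsc_config_cons.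
by apply: E_ext => t tn; rewrite Ge //= tn.
Qed.

Lemma E_lin n G H al be : lsc_diff_config n G -> lsc_diff_config n H ->
  E n (fun s => al * G s + be * H s) = al * E n G + be * E n H.
Proof.
elim: n G H al be => [//|n IH] G H al be lG lH /=.
have E_subn u v : lsc_config n u -> lsc_config n v ->
    E n (fun s => u s - v s) = E n u - E n v.
  move=> lu lv.
  have := IH u v 1 (-1) (lsc_diff_of_lsc lu) (lsc_diff_of_lsc lv).
  by rewrite mul1r mulN1r => <-; apply: E_ext => s _; rewrite mul1r mulN1r.
rewrite (_ : (fun p => _) = fun p =>
    al * E n (fun s => G (p :: s)) + be * E n (fun s => H (p :: s))).
  exact: E_pt_lin (lsc_diff_section_of_sub E_subn lG)
                  (lsc_diff_section_of_sub E_subn lH).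
by apply: funext => p; rewrite IH //; exact: lsc_diff_config_cons.
Qed.

Lemma E_add n G H : lsc_diff_config n G -> lsc_diff_config n H ->
  E n (fun s => G s + H s) = E n G + E n H.
Proof.
move=> lG lH; have := E_lin 1 1 lG lH; rewrite !mul1r => <-.
by apply: E_ext => s _; rewrite !mul1r.
Qed.

Lemma E_sub n G H : lsc_diff_config n G -> lsc_diff_config n H ->
  E n (fun s => G s - H s) = E n G - E n H.
Proof.
move=> lG lH; have := E_lin 1 (-1) lG lH; rewrite mul1r mulN1r => <-.
by apply: E_ext => s _; rewrite mul1r mulN1r.
Qed.

Lemma lsc_diff_config_section n G : lsc_diff_config n.+1 G ->
  lsc_diff_config 1 (fun s => E n (fun t => G (pt s 0 :: t))).
Proof.
apply: lsc_diff_section_of_sub => u v lu lv.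
by apply: E_sub; exact: lsc_diff_of_lsc.
Qed.

Lemma E_mono n G H : lsc_diff_config n G -> lsc_diff_config n H ->
  (forall s, size s = n -> G s <= H s) -> E n G <= E n H.
Proof.
move=> lG lH GH; rewrite -subr_ge0 -E_sub //.
by apply: E_ge0 => s sn; rewrite subr_ge0 GH.
Qed.

Lemma E_sum n (I : Type) (r : seq I) (F : I -> seq (R * R) -> R) :
  (forall i, lsc_diff_config n (F i)) ->
  E n (fun s => \sum_(i <- r) F i s) = \sum_(i <- r) E n (F i).
Proof.
move=> lF; elim: r => [|i r IH].
  by rewrite big_nil (@E_ext n _ (fun _ => 0)) ?E_cst // => s _; rewrite big_nil.
rewrite big_cons -IH -E_add ?lF //; last first.
  by apply: (lsc_diff_sum (@near_config_mono n)) => j; exact: lF.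
by apply: E_ext => s _; rewrite big_cons.
Qed.

Lemma E_sqrB n X k : lsc_diff_config n X ->
  E n (fun s => (X s - k) ^+ 2) = E n (fun s => X s ^+ 2) - 2 * k * E n X + k ^+ 2.
Proof.
move=> lX; have lX2 := lsc_diffX2 (@near_config_mono n) lX.
have lcst : lsc_diff_config n (fun _ => 1) by exact: lsc_diff_cst.
have lB := lsc_diff_lin (@near_config_mono n) (- 2 * k) (k ^+ 2) lX lcst.
rewrite (@E_ext n _ (fun s => X s ^+ 2 + ((- 2 * k) * X s + k ^+ 2 * 1))).
  by rewrite E_add // E_lin // E_cst; ring.
by move=> s _; ring.
Qed.

Lemma E_sqr_le n X : lsc_diff_config n X -> E n X ^+ 2 <= E n (fun s => X s ^+ 2).
Proof.
move=> lX; have := E_sqrB (E n X) lX.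
have : 0 <= E n (fun s => (X s - E n X) ^+ 2).
  by apply: E_ge0 => s _; exact: sqr_ge0.
by move=> nonneg sqrB; rewrite sqrB in nonneg; lra.
Qed.

Lemma E_affine n G al k : lsc_diff_config n G ->
  E n (fun s => al * G s + k) = al * E n G + k.
Proof.
move=> lG; have lcst : lsc_diff_config n (fun _ => 1) by exact: lsc_diff_cst.
rewrite (@E_ext n _ (fun s => al * G s + k * 1)).
  by rewrite E_lin // E_cst // mulr1.
by move=> s _; rewrite mulr1.
Qed.

Lemma Var_etaE n G : lsc_diff_config n G ->
  Var_eta a b c d n G = E n (fun s => G s ^+ 2) - E n G ^+ 2.
Proof. by move=> lG; rewrite /Var_eta E_sqrB //; ring. Qed.

(* [Var G = E_{s,t} (G s - G t)^2 / 2], which is at most [E H / 2]. *)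
Lemma Var_eta_le_half n G H : lsc_diff_config n G -> lsc_diff_config n H ->
  (forall s t, size s = n -> size t = n -> (G s - G t) ^+ 2 <= (H s + H t) / 2) ->
  Var_eta a b c d n G <= E n H / 2.
Proof.
move=> lG lH GH.
have lcst k : lsc_diff_config n (fun _ => k) by exact: lsc_diff_cst.
have lsqrB k : lsc_diff_config n (fun s => (G s - k) ^+ 2).
  by have := lsc_diffX2 (@near_config_mono n)
    (lsc_diffB (@near_config_mono n) lG (lcst k)).
have lHk k : lsc_diff_config n (fun s => 2^-1 * H s + 2^-1 * k).
  by have := lsc_diff_lin (@near_config_mono n) 2^-1 2^-1 lH (lcst k).
set mu := E n G; set V := Var_eta a b c d n G.
have VE : V = E n (fun s => G s ^+ 2) - mu ^+ 2 by exact: Var_etaE.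
have pointwise t : size t = n ->
    (G t - mu) ^+ 2 + V <= 2^-1 * E n H + 2^-1 * H t.
  move=> tn.
  have : E n (fun s => (G s - G t) ^+ 2) <= E n (fun s => 2^-1 * H s + 2^-1 * H t).
    apply: E_mono (lsqrB (G t)) (lHk (H t)) _ => s sn.
    by have := GH s t sn tn; lra.
  by rewrite E_sqrB // E_affine // -/mu VE; lra.
have : E n (fun t => (G t - mu) ^+ 2 + V) <=
       E n (fun t => 2^-1 * H t + 2^-1 * E n H).
  apply: E_mono (lsc_diffD (@near_config_mono n) (lsqrB mu) (lcst V)) (lHk _) _.
  move=> t tn.
  by have := pointwise t tn; lra.
by rewrite E_add // E_cst E_affine // -[E n (fun t => _)]/V; lra.
Qed.

Lemma lsc_diff_config_section_Var n G : lsc_diff_config n.+1 G ->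
  lsc_diff_config 1 (fun s => Var_eta a b c d n (fun t => G (pt s 0 :: t))).
Proof.
move=> lG; have lm := lsc_diff_config_section lG.
have lG2 := lsc_diff_config_section (lsc_diffX2 (@near_config_mono n.+1) lG).
apply: lsc_diff_ext
  (lsc_diffB (@near_config_mono 1) lG2 (lsc_diffX2 (@near_config_mono 1) lm)).
by move=> s _; rewrite Var_etaE //; exact: lsc_diff_config_cons.
Qed.

Lemma Var_eta_S n G : lsc_diff_config n.+1 G ->
  Var_eta a b c d n.+1 G =
  E 1 (fun s => Var_eta a b c d n (fun t => G (pt s 0 :: t))) +
  Var_eta a b c d 1 (fun s => E n (fun t => G (pt s 0 :: t))).
Proof.
move=> lG; set m := fun s => E n (fun t => G (pt s 0 :: t)).
have lm : lsc_diff_config 1 m by exact: lsc_diff_config_section.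
have lmB : lsc_diff_config 1 (fun s => (m s - E 1 m) ^+ 2).
  have lcst : lsc_diff_config 1 (fun _ => E 1 m) by exact: lsc_diff_cst.
  by have := lsc_diffX2 (@near_config_mono 1)
    (lsc_diffB (@near_config_mono 1) lm lcst).
have -> : Var_eta a b c d n.+1 G =
    E 1 (fun s => E n (fun t => (G (pt s 0 :: t) - E 1 m) ^+ 2)) by [].
rewrite /(Var_eta _ _ _ _ 1 m) -E_add //; last exact: lsc_diff_config_section_Var.
apply: E_ext => s _; have lGs := lsc_diff_config_cons (pt s 0) lG.
by rewrite Var_etaE // E_sqrB // /m; ring.
Qed.

Lemma section_sqrB_le n G H0 : lsc_diff_config n.+1 G -> lsc_diff_config n.+1 H0 ->
  (forall u x, size u = n.+1 ->
     `|G u - G (set_nth (0, 0) u 0 x)| <= (H0 u + H0 (set_nth (0, 0) u 0 x)) / 2) ->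
  forall p q, (E n (fun t => G (p :: t)) - E n (fun t => G (q :: t))) ^+ 2 <=
    (E n (fun t => H0 (p :: t) ^+ 2) + E n (fun t => H0 (q :: t) ^+ 2)) / 2.
Proof.
move=> lG lH0 GH p q.
have lGp := lsc_diff_config_cons p lG; have lGq := lsc_diff_config_cons q lG.
have lD : lsc_diff_config n (fun t => G (p :: t) - G (q :: t)).
  by have := lsc_diffB (@near_config_mono n) lGp lGq.
have lH0s u : lsc_diff_config n (fun t => H0 (u :: t) ^+ 2).
  by have := lsc_diffX2 (@near_config_mono n) (lsc_diff_config_cons u lH0).
rewrite -E_sub //; apply: le_trans (E_sqr_le lD) _.
have -> : (E n (fun t => H0 (p :: t) ^+ 2) + E n (fun t => H0 (q :: t) ^+ 2)) / 2 =
    E n (fun t => 2^-1 * H0 (p :: t) ^+ 2 + 2^-1 * H0 (q :: t) ^+ 2).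
  by rewrite E_lin //; ring.
apply: E_mono (lsc_diffX2 (@near_config_mono n) lD)
  (lsc_diff_lin (@near_config_mono n) _ _ (lH0s p) (lH0s q)) _ => t tn.
by have /sqr_le_mean_sqr := GH (p :: t) q (congr1 S tn); lra.
Qed.

Lemma Var_eta_efron_stein n G (H : nat -> seq (R * R) -> R) :
  lsc_diff_config n G -> (forall k, (k < n)%N -> lsc_diff_config n (H k)) ->
  (forall s k x, size s = n -> (k < n)%N ->
     `|G s - G (set_nth (0, 0) s k x)| <=
     (H k s + H k (set_nth (0, 0) s k x)) / 2) ->
  Var_eta a b c d n G <= \sum_(k < n) E n (fun s => H k s ^+ 2).
Proof.
elim: n G H => [|n IH] G H lG lH GH.
  by rewrite big_ord0 /Var_eta /= subrr expr0n.
have lH2 k : (k < n.+1)%N -> lsc_diff_config n.+1 (fun s => H k s ^+ 2).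
  by move=> kn; have := lsc_diffX2 (@near_config_mono n.+1) (lH k kn).
have lH2s k : (k < n.+1)%N ->
    lsc_diff_config 1 (fun s => E n (fun t => H k (pt s 0 :: t) ^+ 2)).
  by move=> kn; exact: (lsc_diff_config_section (lH2 k kn)).
rewrite Var_eta_S // big_ord_recl [X in _ <= X]addrC; apply: lerD.
- apply: (@le_trans _ _ (E 1 (fun s =>
      \sum_(k < n) E n (fun t => H k.+1 (pt s 0 :: t) ^+ 2)))).
    apply: E_mono; first exact: (lsc_diff_config_section_Var lG).
      by have := lsc_diff_sum (@near_config_mono 1) (index_enum 'I_n)
        (fun k : 'I_n => lH2s k.+1 (ltn_ord k)).
    move=> s _; apply: (IH _ (fun k t => H k.+1 (pt s 0 :: t))).
    + exact: lsc_diff_config_cons _ lG.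
    + by move=> k kn; exact: lsc_diff_config_cons _ (lH k.+1 kn).
    + by move=> u k x un kn; exact: GH (pt s 0 :: u) k.+1 x (congr1 S un) kn.
  rewrite E_sum; last by move=> k; exact: lH2s k.+1 (ltn_ord k).
  by apply: ler_sum => k _; rewrite lift0.
- have lm := lsc_diff_config_section lG.
  apply: le_trans (Var_eta_le_half lm (lH2s 0%N isT) _) _.
    move=> s t _ _; apply: section_sqrB_le lG (lH 0%N isT) _ _ _ => u x un.
    exact: GH u 0%N x un isT.
  have -> : E 1 (fun s => E n (fun t => H 0%N (pt s 0 :: t) ^+ 2)) =
    E n.+1 (fun s => H 0%N s ^+ 2) by [].
  have : 0 <= E n.+1 (fun s => H 0%N s ^+ 2).
    by apply: E_ge0 => s _; exact: sqr_ge0.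
  by lra.
Qed.

End Expectation.
End Configurations.

Section Switching.
Variable R : realType.
Variables (a b c d : R) (n : nat).
Implicit Types (s : seq (R * R)) (om : colouring n).

Lemma flipE (k : 'I_n) om i : flip k om i = if i == k then ~~ om i else om i.
Proof. by rewrite /flip ffunE. Qed.

Lemma flipK (k : 'I_n) : involutive (flip k).
Proof.
by move=> om; apply/ffunP => i; rewrite !flipE; case: eqP => // _; exact: negbK.
Qed.

Lemma pt_set_nth s k x i :
  pt (set_nth (0, 0) s k x) i = if i == k then x else pt s i.
Proof. by rewrite /pt nth_set_nth. Qed.

Lemma set_nth_pt s k x :
  (k < size s)%N -> set_nth (0, 0) (set_nth (0, 0) s k x) k (pt s k) = s.
Proof.
move=> ks; apply: (@eq_from_nth _ (0, 0)).
  by rewrite !size_set_nth !(maxn_idPr ks).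
move=> i _; rewrite !nth_set_nth /=; case: eqP => [->//|ik].
by rewrite nth_set_nth /= (introF eqP ik).
Qed.

(* The old crossing path still works: a point of the new cell of [eta_m],
   [m != k], lies either in the old cell of [eta_m] or in the old cell of
   [eta_k], which the old path avoids. *)
Lemma crossing_move_blue s om (k : 'I_n) x : om k = false ->
  crossing a b c d s om -> crossing a b c d (set_nth (0, 0) s k x) (flip k om).
Proof.
move=> omk [g [gc [gr [g0 [g1 gcell]]]]].
exists g; do 4 split => //.
move=> t t01 m [zr zc]; rewrite flipE.
case: (eqVneq m k) => [->|mk]; first by rewrite omk.
have ptv (v : 'I_n) : v != k -> pt (set_nth (0, 0) s k x) v = pt s v.
  move=> vk; rewrite pt_set_nth; case: eqP => // /val_inj vk'.
  by rewrite vk' eqxx in vk.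
have old_dist (v : 'I_n) :
    v != k -> dist2 (pt s m) (g t) <= dist2 (pt s v) (g t).
  by move=> vk; have := zc v; rewrite !ptv.
have [le_mk|lt_km] := leP (dist2 (pt s m) (g t)) (dist2 (pt s k) (g t)).
  apply: (gcell t t01 m); split => // v.
  by case: (eqVneq v k) => [->//|]; exact: old_dist.
suff : om k by rewrite omk.
apply: (gcell t t01 k); split => // v.
case: (eqVneq v k) => [->//|vk]; exact: le_trans (ltW lt_km) (old_dist v vk).
Qed.

Lemma natr_card_set (T : finType) (P : pred T) :
  (#|[set x | P x]|)%:R = \sum_x (P x)%:R :> R.
Proof.
rewrite -sum1_card natr_sum big_mkcond /=; apply: eq_bigr => x _.
case: ifPn => [/set_mem /= -> //|]; case Px: (P x) => // /negP []; exact: mem_set.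
Qed.

Let f s om := fR a b c d s om.

Lemma switching_bound s (k : 'I_n) x om (s' := set_nth (0, 0) s k x) :
  size s = n ->
  `|(f s om)%:R + (f s (flip k om))%:R - (f s' om)%:R - (f s' (flip k om))%:R|
  <= (f s om != f s (flip k om))%:R + (f s' om != f s' (flip k om))%:R :> R.
Proof.
move=> sn.
have back : set_nth (0, 0) s' k (pt s k) = s by rewrite set_nth_pt // sn.
wlog omk : om / om k = false.
  move=> W; case omk: (om k); last exact: W.
  have := W (flip k om); rewrite flipK flipE eqxx omk => /(_ erefl).
  congr (_ <= _); first by congr `|_|; ring.
  by rewrite (eq_sym (f s (flip k om))) (eq_sym (f s' (flip k om))).
have move_s : f s om -> f s' (flip k om).
  by move=> /asboolP h; apply/asboolP; exact: crossing_move_blue.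
have move_s' : f s' om -> f s (flip k om).
  move=> /asboolP h; apply/asboolP; rewrite -back.
  exact: crossing_move_blue.
move: move_s move_s'; case: (f s om); case: (f s (flip k om));
  case: (f s' om); case: (f s' (flip k om)) => /= H1 H2;
  (try by have := H1 isT); (try by have := H2 isT);
  rewrite ler_norml; apply/andP; split; lra.
Qed.

Lemma sum_flip (G : colouring n -> R) (k : 'I_n) :
  \sum_om G om = (\sum_om (G om + G (flip k om))) / 2.
Proof.
have e : \sum_om G (flip k om) = \sum_om G om.
  by rewrite [RHS](reindex_inj (inv_inj (flipK k))).
by rewrite big_split /= e; lra.
Qed.

Lemma probH_move_le s (k : 'I_n) x (s' := set_nth (0, 0) s k x) : size s = n ->
  `|probH a b c d n s - probH a b c d n s'| <=
  (Inf a b c d s k + Inf a b c d s' k) / 2.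
Proof.
move=> sn; rewrite /probH /Inf !natr_card_set.
set N := (2 ^ n)%:R; have N0 : 0 < N by rewrite ltr0n expn_gt0.
rewrite -mulrBl normrM (ger0_norm (x := N^-1)); last by rewrite invr_ge0 ltW.
rewrite -mulrDl mulrAC ler_pM2r ?invr_gt0 //.
rewrite -sumrB (sum_flip _ k) normrM (ger0_norm (x := 2^-1)); last first.
  by rewrite invr_ge0 ler0n.
rewrite ler_pM2r ?invr_gt0 ?ltr0n // -big_split /=.
apply: le_trans (ler_norm_sum _ _ _) _; apply: ler_sum => om _.
apply: le_trans (switching_bound k x om sn); rewrite le_eqVlt; apply/orP; left.
by apply/eqP; congr `|_|; ring.
Qed.

End Switching.

Section VoronoiPerturbation.
Variable R : realType.
Implicit Types (p q z : R * R) (s t : seq (R * R)).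

Lemma sqrt_sum_sqr_le (x y u v : R) :
  Num.sqrt ((x + u) ^+ 2 + (y + v) ^+ 2) <=
  Num.sqrt (x ^+ 2 + y ^+ 2) + (`|u| + `|v|).
Proof.
set S := Num.sqrt (x ^+ 2 + y ^+ 2); have S0 : 0 <= S := sqrtr_ge0 _.
have S2 : S ^+ 2 = x ^+ 2 + y ^+ 2 by rewrite sqr_sqrtr // addr_ge0 ?sqr_ge0.
have xS : `|x| <= S by rewrite -sqrtr_sqr; apply: ler_wsqrtr; rewrite lerDl sqr_ge0.
have yS : `|y| <= S by rewrite -sqrtr_sqr; apply: ler_wsqrtr; rewrite lerDr sqr_ge0.
have xu : x * u <= S * `|u|.
  by apply: le_trans (ler_norm _) _; rewrite normrM ler_wpM2r.
have yv : y * v <= S * `|v|.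
  by apply: le_trans (ler_norm _) _; rewrite normrM ler_wpM2r.
have uv : 0 <= `|u| * `|v| by rewrite mulr_ge0.
rewrite -(ger0_norm (addr_ge0 S0 (addr_ge0 (normr_ge0 u) (normr_ge0 v)))).
rewrite -sqrtr_sqr; apply: ler_wsqrtr.
have -> : (S + (`|u| + `|v|)) ^+ 2 =
    S ^+ 2 + 2 * S * (`|u| + `|v|) + (`|u| ^+ 2 + `|v| ^+ 2) + 2 * (`|u| * `|v|).
  by ring.
rewrite S2 !real_normK ?num_real //; nra.
Qed.

Lemma dist2_le p q z : dist2 p z <= dist2 q z + (`|p.1 - q.1| + `|p.2 - q.2|).
Proof.
have := sqrt_sum_sqr_le (q.1 - z.1) (q.2 - z.2) (p.1 - q.1) (p.2 - q.2).
have -> : q.1 - z.1 + (p.1 - q.1) = p.1 - z.1 by ring.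
by have -> : q.2 - z.2 + (p.2 - q.2) = p.2 - z.2 by ring.
Qed.

Lemma dist2_lipschitz p q z :
  `|dist2 p z - dist2 q z| <= `|p.1 - q.1| + `|p.2 - q.2|.
Proof.
rewrite ler_norml; apply/andP; split; last by have := dist2_le p q z; lra.
by have := dist2_le q p z; rewrite (distrC q.1) (distrC q.2); lra.
Qed.

Lemma dist2_continuous p : continuous (dist2 p).
Proof.
move=> z; apply: continuous_comp; last exact: sqrt_continuous.
by apply: continuousD; apply: continuousM; apply: continuousB;
  (exact: cvg_cst || exact: cvg_fst || exact: cvg_snd).
Qed.

(* Vanishes exactly on the (unrestricted) Voronoi cell of [pt s m]. *)
Definition cell_excess n s (m : 'I_n) z :=
  \sum_(v < n) Num.max (dist2 (pt s m) z - dist2 (pt s v) z) 0.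

Lemma cell_excess_continuous n s (m : 'I_n) : continuous (cell_excess s m).
Proof.
have max0 (f : R * R -> R) : continuous f -> continuous (fun z => Num.max (f z) 0).
  by move=> fc z; apply: continuous_max; [exact: fc | exact: cvg_cst].
apply: (continuous_big add_continuous) => v _; apply: max0 => z.
by apply: continuousB; exact: dist2_continuous.
Qed.

Lemma cell_excess_gt0 n s (m : 'I_n) z :
  (exists v : 'I_n, dist2 (pt s v) z < dist2 (pt s m) z) -> 0 < cell_excess s m z.
Proof.
move=> [v closer]; rewrite /cell_excess (bigD1 v) //=.
apply: (@lt_le_trans _ _ (Num.max (dist2 (pt s m) z - dist2 (pt s v) z) 0)).
  by rewrite lt_max subr_gt0 closer.
by rewrite lerDl; apply: sumr_ge0 => i _; rewrite le_max lexx orbT.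
Qed.

Lemma cell_excess_near n del s t (m : 'I_n) z : near_config n del s t ->
  (forall v : 'I_n, dist2 (pt t m) z <= dist2 (pt t v) z) ->
  cell_excess s m z <= n%:R * (4 * del).
Proof.
move=> cst zcell.
suff : cell_excess s m z <= \sum_(v < n) (4 * del).
  by rewrite sumr_const card_ord [n%:R * _]mulr_natl.
apply: ler_sum => v _.
have moved (i : 'I_n) : `|dist2 (pt s i) z - dist2 (pt t i) z| <= 2 * del.
  have [h1 h2] := cst i (ltn_ord i); have := dist2_lipschitz (pt s i) (pt t i) z.
  by move: h1 h2; rewrite /near_real; lra.
have := moved m; have := moved v; have := zcell v.
rewrite ge_max !ler_norml => tv /andP[v1 v2] /andP[m1 m2].
by apply/andP; split; lra.
Qed.

(* Along a compact path the excess is bounded below, while perturbing the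
   points by [del] changes it by at most [4 n del]. *)
Lemma avoid_cell_stable n s (m : 'I_n) (g : R -> R * R) :
  {within `[0, 1], continuous g} ->
  (forall tau, tau \in `[0, 1] ->
     exists v : 'I_n, dist2 (pt s v) (g tau) < dist2 (pt s m) (g tau)) ->
  exists2 del, 0 < del & forall t, near_config n del s t ->
    forall tau, tau \in `[0, 1] ->
      ~ (forall v : 'I_n, dist2 (pt t m) (g tau) <= dist2 (pt t v) (g tau)).
Proof.
move=> gc far.
have hc : {within `[0, 1], continuous (fun tau => cell_excess s m (g tau))}.
  move=> tau; apply: continuous_comp; first exact: gc.
  exact: cell_excess_continuous.
have [tau0 tau01 hmin] := EVT_min ler01 hc.
set mu := cell_excess s m (g tau0).
have mu0 : 0 < mu by exact: cell_excess_gt0 (far tau0 tau01).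
have D0 : 0 < 4 * n%:R + 1 :> R by rewrite ltr_wpDl ?mulr_ge0.
set del := mu / (4 * n%:R + 1).
have del0 : 0 < del by rewrite divr_gt0.
have muE : mu = 4 * n%:R * del + del by rewrite /del; field; rewrite gt_eqF.
exists del => // t cst tau tau_in zcell.
have := cell_excess_near cst zcell; have := hmin tau tau_in.
rewrite /= -/mu; nra.
Qed.

Lemma common_radius (I : finType) (P : I -> R -> Prop) :
  (forall i, exists2 del, 0 < del & P i del) ->
  (forall i del del', 0 < del' -> del' <= del -> P i del -> P i del') ->
  exists2 del, 0 < del & forall i, P i del.
Proof.
move=> HP Pmono.
suff [del d0 H] : exists2 del, 0 < del & forall i, i \in enum I -> P i del.
  by exists del => // i; apply: H; rewrite mem_enum.
elim: (enum I) => [|i l [d1 d10 H1]]; first by exists 1.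
have [d2 d20 H2] := HP i.
have d0 : 0 < Num.min d1 d2 by rewrite lt_min d10 d20.
exists (Num.min d1 d2) => // j; rewrite in_cons => /orP [/eqP ->|jl].
  by apply: Pmono H2 => //; rewrite ge_min lexx orbT.
by apply: Pmono (H1 _ jl) => //; rewrite ge_min lexx.
Qed.

Variables (a b c d : R) (n : nat).

Lemma crossing_open s (om : colouring n) : crossing a b c d s om ->
  exists2 del, 0 < del & forall t, near_config n del s t -> crossing a b c d t om.
Proof.
move=> [g [gc [gr [g0 [g1 gcell]]]]].
pose P (m : 'I_n) del := forall t, near_config n del s t -> om m = false ->
  forall tau, tau \in `[0, 1] ->
    ~ (forall v : 'I_n, dist2 (pt t m) (g tau) <= dist2 (pt t v) (g tau)).
have [del d0 H] : exists2 del, 0 < del & forall m, P m del.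
  apply: common_radius => [m|m del del' d0 dd Pm t ct]; last first.
    by apply: Pm; exact: near_config_mono ct.
  case omm: (om m); first by exists 1 => // t _; rewrite omm.
  have far tau : tau \in `[0, 1] ->
      exists v : 'I_n, dist2 (pt s v) (g tau) < dist2 (pt s m) (g tau).
    move=> tau01; apply: contrapT => /forallNP no_closer.
    suff : om m by rewrite omm.
    apply: (gcell tau tau01); split => [|v]; first exact: gr.
    by rewrite leNgt; apply/negP; exact: no_closer.
  have [del d0 H] := avoid_cell_stable gc far.
  by exists del => // t ct _; exact: H.
exists del => // t ct; exists g; do 4 split => //.
move=> tau tau01 m [_ zcell]; case omm: (om m) => //.
by have := H m t ct omm tau tau01 zcell.
Qed.

End VoronoiPerturbation.

Section Measurability.
Variable R : realType.
Variables (a b c d : R) (n : nat).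

Lemma lsc_config_crossing (om : colouring n) :
  lsc_config n (fun s => (fR a b c d s om)%:R : R).
Proof.
split.
- by move=> s _; exact: ler0n.
- by exists 1 => s _; case: (fR _ _ _ _ _ _).
- move=> s _ e e0; case fs: (fR a b c d s om); last first.
    by exists 1 => // t _ _; rewrite sub0r (lt_le_trans _ (ler0n _ _)) ?oppr_lt0.
  have [del d0 H] := crossing_open (asboolW fs).
  exists del => // t _ ct; rewrite /fR (asboolT (H t ct)).
  by rewrite ltrBlDr ltrDl.
Qed.

Lemma lsc_diff_config_probH : lsc_diff_config n (fun s => probH a b c d n s).
Proof.
have lsum := lsc_diff_sum (@near_config_mono R n) (index_enum (colouring n))
  (fun om => lsc_diff_of_lsc (lsc_config_crossing om)).
apply: lsc_diff_ext
  (lsc_diff_lin (@near_config_mono R n) (2 ^ n)%:R^-1 0 lsum lsum).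
by move=> s _; rewrite /probH natr_card_set mul0r addr0 mulrC.
Qed.

Lemma lsc_diff_config_Inf (k : 'I_n) :
  lsc_diff_config n (fun s => Inf a b c d s k).
Proof.
have lf om := lsc_diff_of_lsc (lsc_config_crossing om).
have lx om : lsc_diff_config n
    (fun s => (fR a b c d s om != fR a b c d s (flip k om))%:R : R).
  have lff := lsc_diff_of_lsc (nonneg_bounded_lscM (@near_config_mono R n)
    (lsc_config_crossing om) (lsc_config_crossing (flip k om))).
  apply: lsc_diff_ext (lsc_diff_lin (@near_config_mono R n) 1 (-2)
    (lsc_diffD (@near_config_mono R n) (lf om) (lf (flip k om))) lff) => s _.
  by case: (fR _ _ _ _ _ om); case: (fR _ _ _ _ _ (flip k om)) => /=; ring.
have lsum := lsc_diff_sum (@near_config_mono R n) (index_enum (colouring n)) lx.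
apply: lsc_diff_ext
  (lsc_diff_lin (@near_config_mono R n) (2 ^ n)%:R^-1 0 lsum lsum).
by move=> s _; rewrite /Inf natr_card_set mul0r addr0 mulrC.
Qed.

End Measurability.

Theorem theorem2p1 (R : realType) (a b c d : R) (n : nat) :
  a < b -> c < d ->
  Var_eta a b c d n (fun eta => probH a b c d n eta) <=
  \sum_(m < n) E_eta a b c d n (fun eta => Inf a b c d eta m ^+ 2).
Proof.
move=> ab cd.
pose H (k : nat) s : R := oapp (fun m : 'I_n => Inf a b c d s m) 0 (insub k).
have HE (m : 'I_n) : H m = fun s => Inf a b c d s m.
  by apply: funext => s; rewrite /H valK.
apply: le_trans (Var_eta_efron_stein ab cd (H := H) _ _ _) _.
- exact: lsc_diff_config_probH.
- by move=> k kn; rewrite (HE (Ordinal kn)); exact: lsc_diff_config_Inf.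
- move=> s k x sn kn; rewrite (HE (Ordinal kn)).
  exact: (probH_move_le _ _ _ _ (Ordinal kn) x sn).
- by apply: ler_sum => m _; rewrite HE.
Qed.
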